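(* Let $\sigma$ be an erasing $k$-block substitution with $w_\epsilon\ne1^k$ that satisfies the optimality condition. Then the point $x_0=0.w_\epsilon^\infty$ is an almost fixed point of $f_\sigma$.
   Context: Notation: $\mathbb I=[0,1]$. $\{0,1\}^*$ and $\{0,1\}^\omega$ denote finite and infinite binary words, and $\epsilon$ is the empty word. For a word $w$, set $0.w=\sum_iw_i2^{-i}$. For $x\in(0,1]$, $\widetilde x$ is the unique infinite binary expansion of $x$ not ending in $0^\infty$. Fix $k\ge2$. An erasing $k$-block substitution is a map $\sigma:\{0,1\}^k\to\{0,1\}^*$ with exactly one block $w_\epsilon$ such that $\sigma(w_\epsilon)=\epsilon$. It acts blockwise on infinite words, concatenating the images of consecutive $k$-blocks. The map $f_\sigma:\mathbb I\to\mathbb I$ is defined by $f_\sigma(x)=0.\sigma(\widetilde x)$ if $x\in(0,1]$ and $\widetilde x\neq w_\epsilon^\infty$, and $f_\sigma(x)=0$ otherwise. Optimality condition: every $w\in\{0,1\}^\omega$ can be written as $w=\prod_{i\ge1}\sigma(b_i)$ with blocks $b_i\in\{0,1\}^k$ satisfying $\sigma(b_i)\ne\epsilon$. Almost fixed point: for $f:\mathbb I\to\mathbb I$ and $x\in\mathbb I$, set $R^-(f,x)=\{y:f^{-1}(y)\cap(x-\varepsilon,x)\ne\emptyset\ \forall\varepsilon>0\}$ and $R^+(f,x)=\{y:f^{-1}(y)\cap(x,x+\varepsilon)\ne\emptyset\ \forall\varepsilon>0\}$. The point $x$ is an almost fixed point of $f$ if $x$ belongs to the interior (in $\mathbb I$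 with its usual topology) of $R^-(f,x)$ or of $R^+(f,x)$. *)

From Stdlib Require Import Reals Lra List Arith ClassicalEpsilon ClassicalDescription.
From Coquelicot Require Import Coquelicot.
Import ListNotations.
Open Scope R_scope.

(* Finite binary words are [list bool]; infinite binary words are [nat -> bool]
   (bit i of the word is the (i+1)-th letter, i.e. index shifted by one). *)

(* 0.w for a finite word w = sum_i w_i 2^{-i} (i starting at 1). *)
Fixpoint fval (w : list bool) : R :=
  match w with
  | [] => 0
  | b :: w' => (if b then / 2 else 0) + / 2 * fval w'
  end.

Definition ival (w : nat -> bool) : R :=
  Series (fun i => if w i then (/ 2) ^ (S i) else 0).

Definition not_ending_in_zeros (w : nat -> bool) : Prop :=
  forall n, exists m, (n <= m)%nat /\ w m = true.

(* tilde x : the (unique, for x in (0,1]) infinite binary expansion of x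
   not ending in 0^infinity. *)
Definition tilde (x : R) : nat -> bool :=
  epsilon (inhabits (fun _ => false))
    (fun w => ival w = x /\ not_ending_in_zeros w).

(* the i-th k-block (i starting at 0) of an infinite word *)
Definition block (k : nat) (w : nat -> bool) (i : nat) : list bool :=
  map (fun j => w (i * k + j)%nat) (seq 0 k).

Definition iper (u : list bool) : nat -> bool :=
  fun n => nth (n mod length u) u false.

Definition sub_prefix (sigma : list bool -> list bool) (k : nat)
  (w : nat -> bool) (n : nat) : list bool :=
  concat (map (fun i => sigma (block k w i)) (seq 0 n)).

(* 0.sigma(w): the binary value of the (finite or infinite) concatenation
   sigma(b_1) sigma(b_2) ..., computed as the limit of the values of its
   finite prefixes sigma(b_1)...sigma(b_n). *)
Definition sub_val (sigma : list bool -> list bool) (k : nat)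
  (w : nat -> bool) : R :=
  real (Lim_seq (fun n => fval (sub_prefix sigma k w n))).

Definition erasing_subst (k : nat) (sigma : list bool -> list bool)
  (weps : list bool) : Prop :=
  length weps = k /\ sigma weps = [] /\
  (forall b, length b = k -> sigma b = [] -> b = weps).

Definition optimal (k : nat) (sigma : list bool -> list bool) : Prop :=
  forall w : nat -> bool, exists bs : nat -> list bool,
    (forall i, length (bs i) = k /\ sigma (bs i) <> []) /\
    (forall n, let p := concat (map (fun i => sigma (bs i)) (seq 0 n)) in
               p = map w (seq 0 (length p))).

(* the map f_sigma : I -> I (extended by 0 outside I, irrelevant) *)
Definition f_sigma (k : nat) (sigma : list bool -> list bool)
  (weps : list bool) (x : R) : R :=
  if excluded_middle_informative
       (0 < x <= 1 /\ tilde x <> iper weps)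
  then sub_val sigma k (tilde x)
  else 0.

Definition Rminus_set (f : R -> R) (x y : R) : Prop :=
  forall eps, 0 < eps ->
    exists x', 0 <= x' <= 1 /\ x - eps < x' < x /\ f x' = y.

Definition Rplus_set (f : R -> R) (x y : R) : Prop :=
  forall eps, 0 < eps ->
    exists x', 0 <= x' <= 1 /\ x < x' < x + eps /\ f x' = y.

Definition in_interior_I (S : R -> Prop) (x : R) : Prop :=
  0 <= x <= 1 /\ exists delta, 0 < delta /\
    forall y, 0 <= y <= 1 -> Rabs (y - x) < delta -> S y.

Definition almost_fixed_point (f : R -> R) (x : R) : Prop :=
  in_interior_I (Rminus_set f x) x \/ in_interior_I (Rplus_set f x) x.

From Stdlib Require Import Reals List Lra Lia ClassicalEpsilon FunctionalExtensionality.
From Coquelicot Require Import Coquelicot.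
Import ListNotations.
Open Scope R_scope.

(* Let [c] be the first block of an optimal decomposition of [w0 = weps^infinity]:
   [sigma(c)] is a prefix of [w0], and [c] first differs from [weps] at a digit
   [j].  As [w0] is periodic with a digit 0, every [y] near [x0] has a binary
   expansion [v] starting with [sigma(c)]; decomposing the rest of [v] gives a
   decomposition [c, b1, b2, ...] of [v].  The realizer word
   [weps^n c weps b1 weps b2 ...] is then mapped by [f_sigma] to [y] (the [weps]
   are erased and ensure infinitely many 1s), and its value tends to [x0] as [n]
   grows, from the right if [c_j = 1] and from the left if [c_j = 0]. *)

Definition digit_term (w : nat -> bool) (i : nat) : R :=
  if w i then (/ 2) ^ (S i) else 0.

Definition tl (w : nat -> bool) : nat -> bool := fun i => w (S i).

Definition shiftn (L : nat) (w : nat -> bool) : nat -> bool := fun i => w (L + i)%nat.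

Lemma half_pow_pos n : 0 < (/ 2) ^ n.
Proof. apply pow_lt; lra. Qed.

Lemma half_pow_antitone a b : (b <= a)%nat -> (/ 2) ^ a <= (/ 2) ^ b.
Proof.
  induction 1 as [|m _ IH]; [lra|]. simpl. pose proof (half_pow_pos m). lra.
Qed.

Lemma half_pow_small eps : 0 < eps -> exists n, (/ 2) ^ n < eps.
Proof.
  intros He.
  destruct (pow_lt_1_zero (/ 2) ltac:(rewrite Rabs_pos_eq; lra) eps He) as [N HN].
  exists N. specialize (HN N (le_n _)).
  rewrite Rabs_pos_eq in HN by (apply Rlt_le, half_pow_pos). exact HN.
Qed.

Lemma dyadically_small_eq0 a : (forall n, Rabs a <= (/ 2) ^ n) -> a = 0.
Proof.
  intros H. destruct (Req_dec a 0) as [|Ha]; [exact H0|exfalso].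
  destruct (half_pow_small (Rabs a) (Rabs_pos_lt a Ha)) as [n Hn].
  specialize (H n). lra.
Qed.

Lemma is_series_half_pow : is_series (fun i => (/ 2) ^ (S i)) 1.
Proof.
  pose proof (is_series_scal_l (/ 2) _ _
    (is_series_geom (/ 2) ltac:(rewrite Rabs_pos_eq; lra))) as H.
  replace 1 with (scal (/ 2) (/ (1 - / 2)))
    by (unfold scal; simpl; unfold mult; simpl; field).
  eapply is_series_ext; [|exact H].
  intros n; simpl. unfold scal; simpl; unfold mult; simpl. ring.
Qed.

Lemma digit_term_bounds w i : 0 <= digit_term w i <= (/ 2) ^ (S i).
Proof. unfold digit_term; destruct (w i); pose proof (half_pow_pos (S i)); lra. Qed.

Lemma ex_series_digit_term w : ex_series (digit_term w).
Proof.
  apply (@ex_series_le R_AbsRing R_CompleteNormedModule _ (fun i => (/ 2) ^ (S i))).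
  - intros n. change (norm (digit_term w n)) with (Rabs (digit_term w n)).
    pose proof (digit_term_bounds w n). rewrite Rabs_pos_eq; lra.
  - exists 1. apply is_series_half_pow.
Qed.

Lemma ival_bounds w : 0 <= ival w <= 1.
Proof.
  unfold ival. fold (digit_term w). split.
  - replace 0 with (Series (fun n => 0 * digit_term w n))
      by (rewrite Series_scal_l; ring).
    apply Series_le; [intros n; pose proof (digit_term_bounds w n); lra|].
    apply ex_series_digit_term.
  - rewrite <- (is_series_unique _ _ is_series_half_pow).
    apply Series_le; [apply digit_term_bounds|]. exists 1. apply is_series_half_pow.
Qed.

Lemma ival_step w : ival w = (if w 0%nat then / 2 else 0) + / 2 * ival (tl w).
Proof.
  unfold ival. fold (digit_term w). fold (digit_term (tl w)).
  rewrite Series_incr_1 by apply ex_series_digit_term.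
  rewrite <- Series_scal_l. f_equal.
  - unfold digit_term; destruct (w 0%nat); simpl; ring.
  - apply Series_ext. intros n; unfold digit_term, tl. destruct (w (S n)); simpl; ring.
Qed.

Lemma ival_ext w1 w2 : (forall i, w1 i = w2 i) -> ival w1 = ival w2.
Proof. intros H; unfold ival; apply Series_ext; intros; rewrite H; reflexivity. Qed.

Lemma not_ending_in_zeros_tl w : not_ending_in_zeros w -> not_ending_in_zeros (tl w).
Proof.
  intros H n. destruct (H (S n)) as [m [Hm Hw]].
  exists (pred m). unfold tl. split; [lia|]. replace (S (pred m)) with m by lia; exact Hw.
Qed.

Lemma ival_pos_at m : forall w, w m = true -> 0 < ival w.
Proof.
  induction m; intros w H; rewrite ival_step.
  - rewrite H. pose proof (ival_bounds (tl w)); lra.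
  - specialize (IHm (tl w) H). destruct (w 0%nat); lra.
Qed.

Lemma ival_lt1_at m : forall w, w m = false -> ival w < 1.
Proof.
  induction m; intros w H; rewrite ival_step.
  - rewrite H. pose proof (ival_bounds (tl w)); lra.
  - specialize (IHm (tl w) H). destruct (w 0%nat); lra.
Qed.

Lemma ival_pos w : not_ending_in_zeros w -> 0 < ival w.
Proof. intros H. destruct (H 0%nat) as [m [_ Hm]]. exact (ival_pos_at m w Hm). Qed.

Lemma ival_close m : forall w1 w2, (forall i, (i < m)%nat -> w1 i = w2 i) ->
  Rabs (ival w1 - ival w2) <= (/ 2) ^ m.
Proof.
  induction m; intros w1 w2 H.
  - pose proof (ival_bounds w1); pose proof (ival_bounds w2). simpl. apply Rabs_le; lra.
  - rewrite (ival_step w1), (ival_step w2), (H 0%nat) by lia.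
    assert (IH := IHm (tl w1) (tl w2) ltac:(intros i Hi; unfold tl; apply H; lia)).
    replace (_ + / 2 * ival (tl w1) - (_ + / 2 * ival (tl w2)))
      with (/ 2 * (ival (tl w1) - ival (tl w2))) by ring.
    rewrite Rabs_mult, Rabs_pos_eq by lra. simpl. lra.
Qed.

Lemma ival_lt_at m : forall w1 w2, (forall i, (i < m)%nat -> w1 i = w2 i) ->
  w1 m = false -> w2 m = true -> not_ending_in_zeros w2 -> ival w1 < ival w2.
Proof.
  induction m; intros w1 w2 H H1 H2 N2; rewrite (ival_step w1), (ival_step w2).
  - rewrite H1, H2. pose proof (ival_pos _ (not_ending_in_zeros_tl _ N2)).
    pose proof (ival_bounds (tl w1)). lra.
  - rewrite (H 0%nat) by lia.
    assert (IH := IHm (tl w1) (tl w2) ltac:(intros i Hi; unfold tl; apply H; lia)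
                   H1 H2 (not_ending_in_zeros_tl _ N2)).
    lra.
Qed.

Lemma ival_neq_head w1 w2 : w1 0%nat <> w2 0%nat ->
  not_ending_in_zeros w1 -> not_ending_in_zeros w2 -> ival w1 <> ival w2.
Proof.
  intros H N1 N2. destruct (w1 0%nat) eqn:E1, (w2 0%nat) eqn:E2; try congruence.
  - apply Rgt_not_eq, (ival_lt_at 0); auto; intros; lia.
  - apply Rlt_not_eq, (ival_lt_at 0); auto; intros; lia.
Qed.

Lemma ival_inj m : forall w1 w2, w1 m <> w2 m ->
  not_ending_in_zeros w1 -> not_ending_in_zeros w2 -> ival w1 <> ival w2.
Proof.
  induction m; intros w1 w2 H N1 N2; [exact (ival_neq_head w1 w2 H N1 N2)|].
  destruct (Bool.bool_dec (w1 0%nat) (w2 0%nat)) as [E|E].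
  - rewrite (ival_step w1), (ival_step w2), E. intro C.
    apply (IHm (tl w1) (tl w2) H (not_ending_in_zeros_tl _ N1) (not_ending_in_zeros_tl _ N2)).
    lra.
  - exact (ival_neq_head w1 w2 E N1 N2).
Qed.

Lemma tilde_ival w : not_ending_in_zeros w -> tilde (ival w) = w.
Proof.
  intros N. unfold tilde.
  set (P := fun w' => ival w' = ival w /\ not_ending_in_zeros w').
  destruct (epsilon_spec (inhabits (fun _ : nat => false)) P (ex_intro _ w (conj eq_refl N)))
    as [E N'].
  apply functional_extensionality. intros m.
  destruct (Bool.bool_dec (epsilon (inhabits (fun _ : nat => false)) P m) (w m)) as [|D];
    [assumption|].
  exfalso. exact (ival_inj m _ _ D N' N E).
Qed.

Lemma ival_prefix L : forall w,
  ival w = fval (map w (seq 0 L)) + (/ 2) ^ L * ival (shiftn L w).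
Proof.
  induction L; intros w.
  - simpl. rewrite Rmult_1_l, Rplus_0_l. apply ival_ext; reflexivity.
  - cbn [seq map fval]. rewrite <- seq_shift, map_map.
    rewrite (ival_step w), (IHL (tl w)).
    rewrite (ival_ext (shiftn L (tl w)) (shiftn (S L) w)) by reflexivity.
    change (fun x => w (S x)) with (tl w). simpl pow. ring.
Qed.

Lemma ival_prefix_bound L w : 0 <= ival w - fval (map w (seq 0 L)) <= (/ 2) ^ L.
Proof.
  pose proof (ival_prefix L w) as E. pose proof (ival_bounds (shiftn L w)).
  pose proof (half_pow_pos L). split; nra.
Qed.

Lemma fval_snoc l b :
  fval (l ++ [b]) = fval l + (if b then (/ 2) ^ (S (length l)) else 0).
Proof. induction l as [|a l IH]; simpl; [|rewrite IH]; destruct b; simpl; ring. Qed.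

Fixpoint greedy_prefix (y : R) (n : nat) : R :=
  match n with
  | O => 0
  | S n => if Rlt_dec (greedy_prefix y n + (/ 2) ^ (S n)) y
           then greedy_prefix y n + (/ 2) ^ (S n) else greedy_prefix y n
  end.

Definition greedy_digit (y : R) (n : nat) : bool :=
  if Rlt_dec (greedy_prefix y n + (/ 2) ^ (S n)) y then true else false.

Lemma greedy_prefix_fval y n : greedy_prefix y n = fval (map (greedy_digit y) (seq 0 n)).
Proof.
  induction n as [|n IH]; [reflexivity|].
  rewrite seq_S, map_app. simpl map. rewrite fval_snoc, length_map, length_seq, <- IH.
  cbn [greedy_prefix]. unfold greedy_digit. destruct Rlt_dec; ring.
Qed.

Lemma greedy_prefix_approx y : 0 <= y <= 1 ->
  forall n, greedy_prefix y n <= y <= greedy_prefix y n + (/ 2) ^ n.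
Proof. intros Hy n; induction n; simpl; [lra|]. destruct Rlt_dec; simpl in *; lra. Qed.

Lemma ival_greedy y : 0 <= y <= 1 -> ival (greedy_digit y) = y.
Proof.
  intros Hy. cut (ival (greedy_digit y) - y = 0); [lra|].
  apply dyadically_small_eq0. intros n.
  pose proof (ival_prefix_bound n (greedy_digit y)) as Hv.
  rewrite <- greedy_prefix_fval in Hv.
  pose proof (greedy_prefix_approx y Hy n). apply Rabs_le; lra.
Qed.

(* Words with infinitely many zeros, and words in which every 1 is followed
   by a later 1 (i.e. [0^infinity] or words not ending in zeros). *)
Definition not_ending_in_ones (w : nat -> bool) : Prop :=
  forall n, exists m, (n <= m)%nat /\ w m = false.

Definition ones_recur (w : nat -> bool) : Prop :=
  forall i, w i = true -> exists j, (i < j)%nat /\ w j = true.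

(* The midpoint of the dyadic interval of length [2^-i] fixed by the first [i]
   digits of [w]; digit [i] of [w] tells on which side of it [0.w] lies. *)
Definition threshold (w : nat -> bool) (i : nat) : R :=
  fval (map w (seq 0 i)) + (/ 2) ^ (S i).

Lemma threshold_side w i : ones_recur w -> not_ending_in_ones w ->
  (w i = true -> threshold w i < ival w) /\ (w i = false -> ival w < threshold w i).
Proof.
  intros Hone Hzero. unfold threshold.
  rewrite (ival_prefix i w), (ival_step (shiftn i w)).
  replace (shiftn i w 0%nat) with (w i) by (unfold shiftn; f_equal; lia).
  set (t := tl (shiftn i w)). simpl pow. pose proof (half_pow_pos i).
  split; intros Hwi; rewrite Hwi.
  - destruct (Hone i Hwi) as [j [Hij Hj]].
    assert (0 < ival t).
    { apply (ival_pos_at (j - i - 1)). unfold t, tl, shiftn.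
      replace (i + S (j - i - 1))%nat with j by lia. exact Hj. }
    nra.
  - destruct (Hzero (S i)) as [j [Hij Hj]].
    assert (ival t < 1).
    { apply (ival_lt1_at (j - i - 1)). unfold t, tl, shiftn.
      replace (i + S (j - i - 1))%nat with j by lia. exact Hj. }
    nra.
Qed.

Lemma greedy_digit_agree w L y : ones_recur w -> not_ending_in_ones w ->
  0 <= y <= 1 ->
  (forall i, (i < L)%nat -> Rabs (y - ival w) < Rabs (ival w - threshold w i)) ->
  forall i, (i < L)%nat -> greedy_digit y i = w i.
Proof.
  intros Hone Hzero Hy. induction L as [|L IH]; intros Hclose i Hi; [lia|].
  destruct (Nat.lt_ge_cases i L) as [Hlt|Hge].
  - apply IH; [intros; apply Hclose; lia|exact Hlt].
  - replace i with L by lia.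
    assert (Hpre : greedy_prefix y L = fval (map w (seq 0 L))).
    { rewrite greedy_prefix_fval. f_equal. apply map_ext_in. intros a Ha.
      apply in_seq in Ha. apply IH; [intros; apply Hclose; lia|lia]. }
    destruct (threshold_side w L Hone Hzero) as [Ht Hf].
    specialize (Hclose L (Nat.lt_succ_diag_r L)).
    unfold greedy_digit. rewrite Hpre. fold (threshold w L).
    destruct (w L).
    + specialize (Ht eq_refl). rewrite (Rabs_pos_eq (ival w - threshold w L)) in Hclose by lra.
      apply Rabs_def2 in Hclose. destruct Rlt_dec; [reflexivity|lra].
    + specialize (Hf eq_refl). rewrite (Rabs_left (ival w - threshold w L)) in Hclose by lra.
      apply Rabs_def2 in Hclose. destruct Rlt_dec; [lra|reflexivity].
Qed.

Lemma positive_lower_bound (g : nat -> R) L : (forall i, (i < L)%nat -> 0 < g i) ->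
  exists d, 0 < d /\ forall i, (i < L)%nat -> d <= g i.
Proof.
  induction L as [|L IH]; intros Hg.
  - exists 1. split; [lra|intros; lia].
  - destruct IH as [d [Hd Hle]]; [intros; apply Hg; lia|].
    exists (Rmin d (g L)). split; [apply Rmin_glb_lt; [exact Hd|apply Hg; lia]|].
    intros i Hi. destruct (Nat.eq_dec i L) as [->|]; [apply Rmin_r|].
    eapply Rle_trans; [apply Rmin_l|]. apply Hle; lia.
Qed.

Lemma expansion_near w L : ones_recur w -> not_ending_in_ones w ->
  exists delta, 0 < delta /\
    (forall y, 0 <= y <= 1 -> Rabs (y - ival w) < delta ->
       exists v, ival v = y /\ forall i, (i < L)%nat -> v i = w i).
Proof.
  intros Hone Hzero.
  destruct (positive_lower_bound (fun i => Rabs (ival w - threshold w i)) L)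
    as [delta [Hd Hle]].
  { intros i _. apply Rabs_pos_lt.
    destruct (threshold_side w i Hone Hzero) as [Ht Hf].
    destruct (w i); [specialize (Ht eq_refl)|specialize (Hf eq_refl)]; lra. }
  exists delta. split; [exact Hd|]. intros y Hy Hclose.
  exists (greedy_digit y). split; [exact (ival_greedy y Hy)|].
  apply (greedy_digit_agree w L y Hone Hzero Hy).
  intros i Hi. specialize (Hle i Hi). simpl in Hle. lra.
Qed.

Definition blockword (k : nat) (B : nat -> list bool) : nat -> bool :=
  fun m => nth (m mod k) (B (m / k)%nat) false.

Lemma blockword_at k B t i : (i < k)%nat -> blockword k B (t * k + i) = nth i (B t) false.
Proof.
  intros H. unfold blockword.
  rewrite Nat.div_add_l, (Nat.div_small i k H), Nat.add_0_r by lia.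
  rewrite Nat.add_comm, Nat.Div0.mod_add, Nat.mod_small by lia. reflexivity.
Qed.

Lemma map_nth_seq_id (l : list bool) : map (fun i => nth i l false) (seq 0 (length l)) = l.
Proof.
  induction l as [|a l IH]; [reflexivity|]. simpl. f_equal.
  rewrite <- seq_shift, map_map. exact IH.
Qed.

Lemma block_blockword k B t : length (B t) = k -> block k (blockword k B) t = B t.
Proof.
  intros H. unfold block.
  rewrite (map_ext_in _ (fun i => nth i (B t) false)).
  - rewrite <- H. apply map_nth_seq_id.
  - intros i Hi. apply in_seq in Hi. apply blockword_at. lia.
Qed.

Lemma iper_blockword k weps : length weps = k -> iper weps = blockword k (fun _ => weps).
Proof. intros H; unfold iper, blockword; rewrite H; reflexivity. Qed.

Lemma iper_at k weps t i : length weps = k -> (i < k)%nat ->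
  iper weps (t * k + i) = nth i weps false.
Proof. intros Hl Hi. rewrite (iper_blockword k) by exact Hl. apply blockword_at, Hi. Qed.

Lemma first_diff (l1 l2 : list bool) : length l1 = length l2 -> l1 <> l2 ->
  exists j, (j < length l1)%nat /\
    (forall i, (i < j)%nat -> nth i l1 false = nth i l2 false) /\
    nth j l1 false <> nth j l2 false.
Proof.
  revert l2; induction l1 as [|a l1 IH]; intros l2 H N; destruct l2 as [|b l2];
    simpl in *; try congruence; try lia.
  destruct (Bool.bool_dec a b) as [->|D].
  - destruct (IH l2 ltac:(lia) ltac:(congruence)) as [j [Hj [A D]]].
    exists (S j). split; [lia|]. split; [|exact D].
    intros [|i] Hi; [reflexivity|]. apply A; lia.
  - exists 0%nat. split; [lia|]. split; [intros; lia|exact D].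
Qed.

Lemma list_has_digit (l : list bool) b k : length l = k -> l <> repeat (negb b) k ->
  exists i, (i < k)%nat /\ nth i l false = b.
Proof.
  intros H N. destruct (first_diff l (repeat (negb b) k)) as [i [Hi [_ D]]].
  - rewrite repeat_length; exact H.
  - exact N.
  - exists i. split; [lia|].
    rewrite (nth_indep (repeat (negb b) k) false (negb b)), nth_repeat in D
      by (rewrite repeat_length; lia).
    destruct (nth i l false), b; simpl in D; congruence.
Qed.

Section Periodic.
Variables (k : nat) (weps : list bool).
Hypothesis Hlen : length weps = k.
Hypothesis Hk : (1 <= k)%nat.

Lemma iper_recur_digit i : iper weps (i + k) = iper weps i.
Proof.
  unfold iper. rewrite Hlen. f_equal.
  rewrite <- (Nat.mul_1_l k) at 1. now rewrite Nat.Div0.mod_add.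
Qed.

Lemma iper_ones_recur : ones_recur (iper weps).
Proof.
  intros i Hi. exists (i + k)%nat. split; [lia|]. rewrite iper_recur_digit. exact Hi.
Qed.

Lemma iper_digit_infinitely b i0 : (i0 < k)%nat -> nth i0 weps false = b ->
  forall n, exists m, (n <= m)%nat /\ iper weps m = b.
Proof.
  intros Hi0 Hb n. exists (n * k + i0)%nat. split; [nia|].
  rewrite (iper_at k) by assumption. exact Hb.
Qed.

End Periodic.

Definition image_prefix (sigma : list bool -> list bool) (bs : nat -> list bool)
  (M : nat) : list bool :=
  concat (map (fun i => sigma (bs i)) (seq 0 M)).

Definition decomposition (k : nat) (sigma : list bool -> list bool)
  (v : nat -> bool) (bs : nat -> list bool) : Prop :=
  (forall i, length (bs i) = k /\ sigma (bs i) <> []) /\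
  (forall M, image_prefix sigma bs M = map v (seq 0 (length (image_prefix sigma bs M)))).

Lemma optimal_decomposition k sigma v : optimal k sigma ->
  exists bs, decomposition k sigma v bs.
Proof. intros H. exact (H v). Qed.

Lemma image_prefix_S sigma bs M :
  image_prefix sigma bs (S M) = sigma (bs 0%nat) ++ image_prefix sigma (fun i => bs (S i)) M.
Proof.
  unfold image_prefix. cbn [seq map concat]. f_equal.
  rewrite <- seq_shift, map_map. reflexivity.
Qed.

Lemma image_prefix_length sigma bs M : (forall i, sigma (bs i) <> []) ->
  (M <= length (image_prefix sigma bs M))%nat.
Proof.
  intros H. induction M as [|M IH]; [simpl; lia|]. unfold image_prefix in *.
  rewrite seq_S, map_app, concat_app, length_app. simpl. rewrite app_nil_r.
  specialize (H M). destruct (sigma (bs M)); [congruence|simpl; lia].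
Qed.

Lemma decomposition_head k sigma v bs : decomposition k sigma v bs ->
  sigma (bs 0%nat) = map v (seq 0 (length (sigma (bs 0%nat)))).
Proof.
  intros [_ H]. specialize (H 1%nat).
  unfold image_prefix in H. cbn [seq map concat] in H. rewrite app_nil_r in H. exact H.
Qed.

Lemma map_shiftn L w n : map (shiftn L w) (seq 0 n) = map w (seq L n).
Proof.
  induction n as [|n IH]; [reflexivity|].
  rewrite !seq_S, !map_app, IH. reflexivity.
Qed.

Lemma decomposition_cons k sigma c bs v :
  length c = k -> sigma c <> [] ->
  sigma c = map v (seq 0 (length (sigma c))) ->
  decomposition k sigma (shiftn (length (sigma c)) v) bs ->
  decomposition k sigma v (fun i => match i with O => c | S i => bs i end).
Proof.
  intros Hc Hne Hpre [Hbs Hdec]. split; [intros [|i]; [split; assumption|apply Hbs]|].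
  intros [|M]; [reflexivity|]. rewrite image_prefix_S. change (fun i => bs i) with bs.
  rewrite length_app, seq_app, map_app, <- Hpre. f_equal.
  rewrite (Hdec M) at 1. apply map_shiftn.
Qed.

Lemma sub_val_of_prefixes sigma k w v :
  (forall N, sub_prefix sigma k w N = map v (seq 0 (length (sub_prefix sigma k w N)))) ->
  (forall m, exists N0, forall N, (N0 <= N)%nat -> (m <= length (sub_prefix sigma k w N))%nat) ->
  sub_val sigma k w = ival v.
Proof.
  intros Hpre Hlen. unfold sub_val.
  assert (Hlim : is_lim_seq (fun N => fval (sub_prefix sigma k w N)) (ival v)).
  { apply is_lim_seq_spec. intros eps.
    destruct (half_pow_small eps (cond_pos eps)) as [m Hm].
    destruct (Hlen m) as [N0 HN0]. exists N0. intros N HN.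
    rewrite Hpre. pose proof (ival_prefix_bound (length (sub_prefix sigma k w N)) v).
    pose proof (half_pow_antitone _ _ (HN0 N HN)).
    rewrite Rabs_minus_sym, Rabs_pos_eq by lra. lra. }
  rewrite (is_lim_seq_unique _ _ Hlim). reflexivity.
Qed.

(* The block sequence [weps^n, bs 0, weps, bs 1, weps, bs 2, ...]. *)
Definition interleave (weps : list bool) (bs : nat -> list bool) (n j : nat) : list bool :=
  if (j <? n)%nat then weps
  else if ((j - n) mod 2 =? 0)%nat then bs ((j - n) / 2)%nat else weps.

Ltac div2_facts a :=
  pose proof (Nat.div_mod_eq a 2); pose proof (Nat.mod_upper_bound a 2 ltac:(lia)).

Lemma interleave_lt weps bs n j : (j < n)%nat -> interleave weps bs n j = weps.
Proof. intros H; unfold interleave. destruct (Nat.ltb_spec j n); [reflexivity|lia]. Qed.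

Lemma interleave_even weps bs n t : interleave weps bs n (n + 2 * t) = bs t.
Proof.
  unfold interleave. destruct (Nat.ltb_spec (n + 2 * t) n); [lia|].
  replace (n + 2 * t - n)%nat with (t * 2)%nat by lia.
  rewrite Nat.Div0.mod_mul, Nat.div_mul by lia. reflexivity.
Qed.

Lemma interleave_odd weps bs n t : interleave weps bs n (n + 2 * t + 1) = weps.
Proof.
  unfold interleave. destruct (Nat.ltb_spec (n + 2 * t + 1) n); [lia|].
  replace (n + 2 * t + 1 - n)%nat with (1 + t * 2)%nat by lia.
  rewrite Nat.Div0.mod_add. reflexivity.
Qed.

(* Since [weps] is erased, the images of the interleaved blocks only see [bs]. *)
Lemma image_prefix_interleave sigma weps bs n N : sigma weps = [] ->
  image_prefix sigma (interleave weps bs n) N = image_prefix sigma bs ((N - n + 1) / 2).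
Proof.
  intros Hs. induction N as [|N IH].
  - replace ((0 - n + 1) / 2)%nat with 0%nat by (rewrite Nat.sub_0_l; reflexivity).
    reflexivity.
  - unfold image_prefix in *.
    rewrite seq_S, map_app, concat_app, IH. cbn [map concat]. rewrite app_nil_r, Nat.add_0_l.
    unfold interleave. destruct (Nat.ltb_spec N n).
    + rewrite Hs, app_nil_r. do 3 f_equal. div2_facts (N - n + 1)%nat.
      div2_facts (S N - n + 1)%nat. lia.
    + destruct (Nat.eqb_spec ((N - n) mod 2) 0).
      * replace ((S N - n + 1) / 2)%nat with (S ((N - n + 1) / 2)).
        -- rewrite seq_S, map_app, concat_app. cbn [map concat]. rewrite app_nil_r.
           do 3 f_equal. div2_facts (N - n)%nat. div2_facts (N - n + 1)%nat. lia.
        -- div2_facts (N - n)%nat. div2_facts (N - n + 1)%nat. div2_facts (S N - n + 1)%nat.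
           lia.
      * rewrite Hs, app_nil_r. do 3 f_equal. div2_facts (N - n)%nat.
        div2_facts (N - n + 1)%nat. div2_facts (S N - n + 1)%nat. lia.
Qed.

Definition realizer (k : nat) (weps : list bool) (bs : nat -> list bool) (n : nat) :
  nat -> bool := blockword k (interleave weps bs n).

Section Realizer.
Variables (k : nat) (sigma : list bool -> list bool) (weps : list bool)
  (bs : nat -> list bool) (v : nat -> bool) (n : nat).
Hypothesis Hk : (1 <= k)%nat.
Hypothesis HE : erasing_subst k sigma weps.
Hypothesis Hdec : decomposition k sigma v bs.

Let W := realizer k weps bs n.

Lemma interleave_length j : length (interleave weps bs n j) = k.
Proof.
  destruct HE as [Hl _]. unfold interleave.
  destruct (j <? n)%nat; [exact Hl|]. destruct (_ =? _)%nat; [apply Hdec|exact Hl].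
Qed.

Lemma decomposition_block_ne i : bs i <> weps.
Proof.
  destruct HE as [_ [Hs _]]. intro E. apply (proj2 (proj1 Hdec i)). rewrite E. exact Hs.
Qed.

(* The realizer has infinitely many 1s: if [weps] has a 1 the interleaved copies
   of [weps] supply them, and otherwise every [bs t <> weps = 0^k] contains one. *)
Lemma realizer_not_ending_in_zeros : not_ending_in_zeros W.
Proof.
  intros t. unfold W, realizer.
  destruct (list_eq_dec Bool.bool_dec weps (repeat false k)) as [Ez|Ez].
  - destruct (list_has_digit (bs t) true k) as [i [Hi H1]].
    + apply Hdec.
    + cbn [negb]. rewrite <- Ez. apply decomposition_block_ne.
    + exists ((n + 2 * t) * k + i)%nat. split; [nia|].
      rewrite blockword_at, interleave_even by exact Hi. exact H1.
  - destruct (list_has_digit weps true k (proj1 HE) Ez) as [i [Hi H1]].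
    exists ((n + 2 * t + 1) * k + i)%nat. split; [nia|].
    rewrite blockword_at, interleave_odd by exact Hi. exact H1.
Qed.

Lemma realizer_prefix m : (m < n * k)%nat -> W m = iper weps m.
Proof.
  intros H. rewrite (iper_blockword k) by apply HE. unfold W, realizer, blockword.
  rewrite interleave_lt; [reflexivity|]. apply Nat.Div0.div_lt_upper_bound. lia.
Qed.

Lemma realizer_first_block i : (i < k)%nat -> W (n * k + i) = nth i (bs 0%nat) false.
Proof.
  intros H. unfold W, realizer. rewrite blockword_at by exact H.
  rewrite <- (interleave_even weps bs n 0), Nat.mul_0_r, Nat.add_0_r. reflexivity.
Qed.

Lemma realizer_sub_prefix N :
  sub_prefix sigma k W N = image_prefix sigma bs ((N - n + 1) / 2).
Proof.
  rewrite <- (image_prefix_interleave sigma weps bs n N) by apply HE.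
  unfold sub_prefix, image_prefix. f_equal. apply map_ext. intros j.
  unfold W, realizer. rewrite block_blockword by apply interleave_length. reflexivity.
Qed.

Lemma realizer_sub_val : sub_val sigma k W = ival v.
Proof.
  apply sub_val_of_prefixes.
  - intros N. rewrite realizer_sub_prefix. apply Hdec.
  - intros m. exists (n + 2 * m)%nat. intros N HN. rewrite realizer_sub_prefix.
    eapply Nat.le_trans; [|apply image_prefix_length; intros; apply Hdec].
    div2_facts (N - n + 1)%nat. lia.
Qed.

(* The realizer is the canonical expansion of its value and differs from
   [weps^infinity], so [f_sigma] maps its value to [0.v]. *)
Lemma realizer_value : f_sigma k sigma weps (ival W) = ival v.
Proof.
  assert (N : not_ending_in_zeros W) by apply realizer_not_ending_in_zeros.
  unfold f_sigma. rewrite tilde_ival by exact N.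
  destruct ClassicalDescription.excluded_middle_informative as [_|C].
  - apply realizer_sub_val.
  - exfalso. apply C. split; [split; [apply ival_pos, N|apply ival_bounds]|]. intro E.
    destruct (first_diff (bs 0%nat) weps) as [i [Hi [_ D]]].
    + rewrite (proj1 (proj1 Hdec 0%nat)). symmetry. apply HE.
    + apply decomposition_block_ne.
    + rewrite (proj1 (proj1 Hdec 0%nat)) in Hi. apply D.
      rewrite <- (realizer_first_block i Hi), <- (iper_at k weps n i (proj1 HE) Hi), E.
      reflexivity.
Qed.

End Realizer.

Definition on_side (b : bool) (x0 x : R) : Prop := if b then x0 < x else x < x0.

Lemma side_of_periodic_point k weps c W n j :
  length weps = k -> (j < k)%nat ->
  (forall m, (m < n * k)%nat -> W m = iper weps m) ->
  (forall i, (i < k)%nat -> W (n * k + i)%nat = nth i c false) ->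
  (forall i, (i < j)%nat -> nth i c false = nth i weps false) ->
  nth j c false <> nth j weps false ->
  not_ending_in_zeros W ->
  on_side (nth j c false) (ival (iper weps)) (ival W).
Proof.
  intros Hl Hj Hpre Hblk Hagree Hdiff N.
  assert (Hbelow : forall m, (m < n * k + j)%nat -> W m = iper weps m).
  { intros m Hm. destruct (Nat.lt_ge_cases m (n * k)) as [Hlt|Hge]; [exact (Hpre m Hlt)|].
    replace m with (n * k + (m - n * k))%nat by lia.
    rewrite Hblk, (iper_at k) by (assumption || lia). apply Hagree. lia. }
  assert (HWj : W (n * k + j)%nat = nth j c false) by exact (Hblk j Hj).
  assert (Hwj : iper weps (n * k + j)%nat = nth j weps false) by exact (iper_at k weps n j Hl Hj).
  unfold on_side. destruct (nth j c false) eqn:Hc.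
  - assert (Hwj0 : nth j weps false = false) by (destruct (nth j weps false); congruence).
    apply (ival_lt_at (n * k + j)); [|congruence|exact HWj|exact N].
    intros m Hm. symmetry. exact (Hbelow m Hm).
  - assert (Hwj1 : nth j weps false = true) by (destruct (nth j weps false); congruence).
    apply (ival_lt_at (n * k + j)); [exact Hbelow|exact HWj|congruence|].
    exact (iper_digit_infinitely k weps Hl ltac:(lia) true j Hj Hwj1).
Qed.

Lemma preimages_near_periodic_point k sigma weps c v j eps :
  (1 <= k)%nat -> erasing_subst k sigma weps -> optimal k sigma ->
  length c = k -> sigma c <> [] -> sigma c = map v (seq 0 (length (sigma c))) ->
  (j < k)%nat -> (forall i, (i < j)%nat -> nth i c false = nth i weps false) ->
  nth j c false <> nth j weps false -> 0 < eps ->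
  exists x, 0 <= x <= 1 /\ Rabs (x - ival (iper weps)) < eps /\
    f_sigma k sigma weps x = ival v /\ on_side (nth j c false) (ival (iper weps)) x.
Proof.
  intros Hk HE Hopt Hc Hne Hpre Hj Hagree Hdiff Heps.
  destruct (optimal_decomposition k sigma (shiftn (length (sigma c)) v) Hopt) as [bs Hbs].
  set (cbs := fun i => match i with O => c | S i => bs i end).
  assert (Hdec : decomposition k sigma v cbs)
    by exact (decomposition_cons k sigma c bs v Hc Hne Hpre Hbs).
  destruct (half_pow_small eps Heps) as [n Hn].
  exists (ival (realizer k weps cbs n)). split; [apply ival_bounds|]. split.
  - eapply Rle_lt_trans; [exact (ival_close _ _ _ (realizer_prefix k sigma weps cbs n Hk HE))|].
    eapply Rle_lt_trans; [apply (half_pow_antitone (n * k) n); nia|exact Hn].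
  - split; [exact (realizer_value k sigma weps cbs v n Hk HE Hdec)|].
    apply (side_of_periodic_point k weps c _ n j (proj1 HE) Hj); try assumption.
    + exact (realizer_prefix k sigma weps cbs n Hk HE).
    + exact (realizer_first_block k weps cbs n).
    + exact (realizer_not_ending_in_zeros k sigma weps cbs v n Hk HE Hdec).
Qed.

Lemma one_sided_preimages k sigma weps :
  (1 <= k)%nat -> erasing_subst k sigma weps -> weps <> repeat true k -> optimal k sigma ->
  exists (side : bool) delta, 0 < delta /\
    forall y, 0 <= y <= 1 -> Rabs (y - ival (iper weps)) < delta ->
    forall eps, 0 < eps -> exists x, 0 <= x <= 1 /\ Rabs (x - ival (iper weps)) < eps /\
      f_sigma k sigma weps x = y /\ on_side side (ival (iper weps)) x.
Proof.
  intros Hk HE Hnot1 Hopt. pose proof (proj1 HE) as Hlen.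
  set (w0 := iper weps).
  (* [w0] is periodic with a digit 0, so points near [0.w0] have expansions
     sharing long prefixes with [w0]. *)
  assert (Hzero : not_ending_in_ones w0).
  { destruct (list_has_digit weps false k Hlen Hnot1) as [i0 [Hi0 H0]].
    exact (iper_digit_infinitely k weps Hlen Hk false i0 Hi0 H0). }
  (* [c]: the first block of a decomposition of [w0], so [sigma c] is a prefix of [w0]. *)
  destruct (optimal_decomposition k sigma w0 Hopt) as [ds Hds].
  set (c := ds 0%nat).
  assert (Hc : length c = k /\ sigma c <> []) by apply Hds.
  assert (Hcpre : sigma c = map w0 (seq 0 (length (sigma c))))
    by exact (decomposition_head k sigma w0 ds Hds).
  assert (Hcw : c <> weps) by (intro E; apply (proj2 Hc); rewrite E; apply HE).
  destruct (first_diff c weps) as [j [Hj [Hagree Hdiff]]]; [lia|exact Hcw|].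
  rewrite (proj1 Hc) in Hj.
  destruct (expansion_near w0 (length (sigma c)) (iper_ones_recur k weps Hlen Hk) Hzero)
    as [delta [Hdelta Hnear]].
  exists (nth j c false), delta. split; [exact Hdelta|].
  intros y Hy Hclose eps Heps. destruct (Hnear y Hy Hclose) as [v [<- Hv]].
  apply (preimages_near_periodic_point k sigma weps c v j eps); try (assumption || apply Hc).
  rewrite Hcpre at 1. apply map_ext_in. intros i Hi. apply in_seq in Hi.
  symmetry. apply Hv. lia.
Qed.

Theorem lemma4p9 (k : nat) (sigma : list bool -> list bool) (weps : list bool) :
  (2 <= k)%nat ->
  erasing_subst k sigma weps ->
  weps <> repeat true k ->
  optimal k sigma ->
  almost_fixed_point (f_sigma k sigma weps) (ival (iper weps)).
Proof.
  intros Hk2 HE Hnot1 Hopt.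
  destruct (one_sided_preimages k sigma weps ltac:(lia) HE Hnot1 Hopt)
    as [side [delta [Hdelta Hpre]]].
  destruct side; [right|left]; (split; [apply ival_bounds|]);
    exists delta; (split; [exact Hdelta|]); intros y Hy Hclose eps Heps;
    destruct (Hpre y Hy Hclose eps Heps) as [x [Hx [Hxe [Hfx Hside]]]];
    exists x; unfold on_side in Hside; apply Rabs_def2 in Hxe;
    (split; [exact Hx|]); (split; [lra|exact Hfx]).
Qed.
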